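(* Let $\alpha>0$ and $\kappa>0$ be given, and for $n\ge 0$ set $\rho_{\kappa n}=\max\bigl(\tfrac12,\,1-\tfrac{\kappa}{n+1}\bigr)$. Let $(\delta_{nj})_{n\ge 0,\,0\le j\le n}$ be a triangular family of real numbers with $\sup_{n,j}|\delta_{nj}|<\tfrac12$. For $n\ge 0$ and $|z|=1$ define $R_n(z)>0$ by \[ \Bigl|\prod_{j=0}^{n}\bigl(z-\rho_{\kappa n}e^{\frac{2\pi i (j+\alpha\delta_{nj})}{n+1}}\bigr)\Bigr| = R_n(z)\,\Bigl|\prod_{j=0}^{n}\bigl(z-\rho_{\kappa n}e^{\frac{2\pi i (j+\delta_{nj})}{n+1}}\bigr)\Bigr|^{\alpha}. \] Then there exist constants $0<c\le C<\infty$ such that $c\le R_n(z)\le C$ for all $z$ on the unit circle $\mathbb{T}$ and all $n\ge 0$. *)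

(* complex numbers modelled as R*R (points of the plane). *)
From Stdlib Require Import Reals Lra.
Open Scope R_scope.

Definition cdist (z w : R * R) : R :=
  sqrt ((fst z - fst w) ^ 2 + (snd z - snd w) ^ 2).

Definition cpolar (r theta : R) : R * R := (r * cos theta, r * sin theta).

(* prod_upto f n = f 0 * f 1 * ... * f n  (n+1 factors) *)
Fixpoint prod_upto (f : nat -> R) (n : nat) : R :=
  match n with
  | O => f O
  | S m => prod_upto f m * f (S m)
  end.

Definition rho (kappa : R) (n : nat) : R :=
  Rmax (1/2) (1 - kappa / (INR n + 1)).

Definition absprod (kappa a : R) (delta : nat -> nat -> R) (n : nat) (z : R * R) : R :=
  prod_upto (fun j => cdist z (cpolar (rho kappa n)
                 (2 * PI * (INR j + a * delta n j) / (INR n + 1)))) n.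

(* R_n(z) defined by |P_alpha| = R_n(z) |P_1|^alpha *)
Definition Rn (kappa alpha : R) (delta : nat -> nat -> R) (n : nat) (z : R * R) : R :=
  absprod kappa alpha delta n z / Rpower (absprod kappa 1 delta n z) alpha.

From Stdlib Require Import Reals Lra ClassicalEpsilon FunctionalExtensionality.
From HB Require Import structures.
From mathcomp Require Import all_boot all_algebra.
Open Scope R_scope.

(* Write z = e^{i ph} and ell(t) = ln |e^{i ph} - rho e^{i t}|^2.  Then
     2 ln R_n(z) = sum_j [ell(t_j + alpha e_j) - alpha ell(t_j + e_j)
                          + (alpha - 1) ell(t_j)] + 2 (1 - alpha) ln |P_0(z)|
   with t_j = 2 pi j/(n+1) and e_j = 2 pi delta_{nj}/(n+1).
   - The unperturbed product is explicit: P_0(z) = z^{n+1} - rho^{n+1}, so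
     |ln |P_0(z)|| is bounded because rho^{n+1} <= max(1/2, e^{-kappa}) < 1.
     This uses the factorisation of X^N - 1 over a primitive root of unity,
     for which the plane R x R is given a MathComp field structure.
   - Each bracket is a second difference of ell; by the mean value theorem it
     is O(e_j^2 / min Gf) where Gf = e^{ell}.  On the relevant window,
     Gf >= c (1 + d_j^2)/(n+1)^2 with d_j the circular distance between the
     node and z measured in units of 2 pi/(n+1) (this uses 1 - rho >~ 1/(n+1)),
     so the j-th bracket is O(1/(1 + d_j^2)), and these weights have sums
     bounded by a telescoping arctangent sum. *)

(* The only purely
   complex-algebraic fact the proof needs is the factorisation of
   z^N - r^N over the N-th roots of unity, which we take from MathComp's
   polynomial library once [cx] is a MathComp field. *)
Record cx := Cx { re : R; im : R }.

Lemma cxE (a b : cx) : re a = re b -> im a = im b -> a = b.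
Proof. by case: a; case: b => /= ? ? ? ? -> ->. Qed.

Definition cx_eqb (a b : cx) : bool :=
  if Req_EM_T (re a) (re b) then (if Req_EM_T (im a) (im b) then true else false)
  else false.

Lemma cx_eqP : Equality.axiom cx_eqb.
Proof.
move=> [a1 a2] [b1 b2]; rewrite /cx_eqb /=.
case: Req_EM_T => [h1|h]; last by constructor; case.
case: Req_EM_T => [h2|h]; last by constructor; case.
by constructor; subst.
Qed.
HB.instance Definition _ := hasDecEq.Build cx cx_eqP.

Definition cx_find (P : pred cx) (_ : nat) : option cx :=
  match excluded_middle_informative (exists x, P x) with
  | left h => Some (proj1_sig (constructive_indefinite_description _ h))
  | right _ => None
  end.

Lemma cx_find_correct P n x : cx_find P n = Some x -> P x.
Proof.
rewrite /cx_find; case: excluded_middle_informative => // h [<-].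
exact: (proj2_sig (constructive_indefinite_description _ h)).
Qed.

Lemma cx_find_complete (P : pred cx) : (exists x, P x) -> exists n, cx_find P n.
Proof. by move=> h; exists 0%nat; rewrite /cx_find; case: excluded_middle_informative. Qed.

Lemma cx_find_ext (P Q : pred cx) : P =1 Q -> cx_find P =1 cx_find Q.
Proof. by move=> h; rewrite (functional_extensionality _ _ h). Qed.
HB.instance Definition _ := hasChoice.Build cx cx_find_correct cx_find_complete cx_find_ext.

Definition cadd a b := Cx (re a + re b) (im a + im b).
Definition copp a := Cx (- re a) (- im a).
Definition cmul a b := Cx (re a * re b - im a * im b) (re a * im b + im a * re b).
Definition cinv a :=
  Cx (re a / (re a ^ 2 + im a ^ 2)) (- im a / (re a ^ 2 + im a ^ 2)).

Lemma caddA : associative cadd. Proof. by move=> a b c; apply: cxE => /=; lra. Qed.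
Lemma caddC : commutative cadd. Proof. by move=> a b; apply: cxE => /=; lra. Qed.
Lemma cadd0 : left_id (Cx 0 0) cadd. Proof. by move=> a; apply: cxE => /=; lra. Qed.
Lemma caddN : left_inverse (Cx 0 0) copp cadd.
Proof. by move=> a; apply: cxE => /=; lra. Qed.
HB.instance Definition _ := GRing.isZmodule.Build cx caddA caddC cadd0 caddN.

Lemma cmulA : associative cmul. Proof. by move=> a b c; apply: cxE => /=; ring. Qed.
Lemma cmulC : commutative cmul. Proof. by move=> a b; apply: cxE => /=; ring. Qed.
Lemma cmul1 : left_id (Cx 1 0) cmul. Proof. by move=> a; apply: cxE => /=; ring. Qed.
Lemma cmulDl : left_distributive cmul cadd.
Proof. by move=> a b c; apply: cxE => /=; ring. Qed.
Lemma cone_neq0 : Cx 1 0 != Cx 0 0.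
Proof. by apply/eqP => /(congr1 re) /=; lra. Qed.
HB.instance Definition _ :=
  GRing.Zmodule_isComNzRing.Build cx cmulA cmulC cmul1 cmulDl cone_neq0.

Lemma cmulV (x : cx) : x != 0%R -> cmul (cinv x) x = Cx 1 0.
Proof.
move=> hx; have h : re x ^ 2 + im x ^ 2 <> 0.
  by move=> h0; move/eqP: hx; apply; apply: cxE => /=; nra.
by apply: cxE => /=; field; rewrite -!Rsqr_pow2 in h.
Qed.
Lemma cinv0 : cinv (Cx 0 0) = Cx 0 0.
Proof. by apply: cxE => /=; rewrite /Rdiv; ring. Qed.
HB.instance Definition _ := GRing.ComNzRing_isField.Build cx cmulV cinv0.

Lemma prod_upto_ext f g n : (forall j, f j = g j) -> prod_upto f n = prod_upto g n.
Proof. by move=> h; elim: n => [|n IH] /=; rewrite ?IH h. Qed.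

Lemma prod_upto_sq f n : prod_upto f n ^ 2 = prod_upto (fun j => f j ^ 2) n.
Proof. by elim: n => [|n IH] //=; rewrite -IH; ring. Qed.

Lemma prod_upto_nonneg f n : (forall j, 0 <= f j) -> 0 <= prod_upto f n.
Proof. by move=> h; elim: n => [|n IH] /=; [exact: h | apply: Rmult_le_pos]. Qed.

Lemma prod_upto_pos f n : (forall j, 0 < f j) -> 0 < prod_upto f n.
Proof. by move=> h; elim: n => [|n IH] /=; [exact: h | apply: Rmult_lt_0_compat]. Qed.

Section ComplexPlane.
Import GRing.Theory.

Definition nrm2 (a : cx) := re a ^ 2 + im a ^ 2.

Lemma nrm2_mul (a b : cx) : nrm2 (a * b)%R = nrm2 a * nrm2 b.
Proof. by rewrite /nrm2 /=; ring. Qed.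

Lemma nrm2_exp (a : cx) k : nrm2 (a ^+ k)%R = nrm2 a ^ k.
Proof.
elim: k => [|k IH]; first by rewrite /nrm2 /=; ring.
by rewrite exprS nrm2_mul IH.
Qed.

Lemma nrm2_prod (F : nat -> cx) n :
  nrm2 (\prod_(0 <= i < n.+1) F i)%R = prod_upto (fun i => nrm2 (F i)) n.
Proof.
elim: n => [|n IH]; first by rewrite big_nat1.
by rewrite big_nat_recr //= nrm2_mul IH.
Qed.

Lemma nrm2_unit_sub_real (W : cx) q : nrm2 W = 1 -> 0 <= q ->
  (1 - q) ^ 2 <= nrm2 (W - Cx q 0)%R <= (1 + q) ^ 2.
Proof.
rewrite /nrm2 /= => hW hq.
have hre : -1 <= re W <= 1 by split; nra.
by split; nra.
Qed.

Lemma prod_sub_root_powers (F : fieldType) (N : nat) (r z w : F) :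
  (N.-primitive_root w)%R -> r != 0%R ->
  (\prod_(0 <= i < N) (z - r * w ^+ i) = z ^+ N - r ^+ N)%R.
Proof.
move=> prim r0.
have e i : (z - r * w ^+ i = r * (z / r - w ^+ i))%R.
  by rewrite mulrBr [(r * (z / r))%R]mulrC divfK.
rewrite (eq_bigr _ (fun i _ => e i)) big_split /= prodr_const_nat subn0.
have := factor_Xn_sub_1 prim; move/(congr1 (fun p => p.[z / r]%R)).
rewrite horner_prod; under eq_bigr do rewrite hornerXsubC.
rewrite !hornerE => ->.
by rewrite mulrBr mulr1 -exprMn (mulrC r) divfK.
Qed.

Definition cexp (t : R) := Cx (cos t) (sin t).

Lemma cexp_add a b : (cexp a * cexp b)%R = cexp (a + b).
Proof. by apply: cxE; rewrite /= ?cos_plus ?sin_plus; ring. Qed.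

Lemma cexp_pow a k : ((cexp a) ^+ k)%R = cexp (INR k * a).
Proof.
elim: k => [|k IH]; first by apply: cxE; rewrite /= ?Rmult_0_l ?cos_0 ?sin_0.
by rewrite exprS IH cexp_add S_INR; congr cexp; ring.
Qed.

Lemma cos_lt1 t : 0 < t < 2 * PI -> cos t < 1.
Proof.
move=> [h1 h2]; have -> : t = 2 * (t / 2) by field.
rewrite cos_2a_sin; have : 0 < sin (t / 2) by apply: sin_gt_0; lra.
nra.
Qed.

Lemma cexp_primitive (n : nat) :
  ((n.+1).-primitive_root (cexp (2 * PI / (INR n + 1))))%R.
Proof.
have hN : 0 < INR n + 1 by have := pos_INR n; lra.
set w := cexp _.
have wn : (w ^+ n.+1 = 1)%R.
  rewrite /w cexp_pow.
  have -> : INR n.+1 * (2 * PI / (INR n + 1)) = 0 + 2 * INR 1 * PI.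
    by rewrite S_INR /=; field; lra.
  by rewrite /cexp cos_period sin_period cos_0 sin_0.
have [m pm mdvd] := prim_order_exists (ltn0Sn n) wn.
have mle := dvdn_leq (ltn0Sn n) mdvd.
case: (ltngtP m n.+1) => [hm|hm|<-] //; last by rewrite ltnNge mle in hm.
have hmR : 0 < INR m < INR n + 1.
  split; first by apply: lt_0_INR; apply/ltP; exact: prim_order_gt0 pm.
  by rewrite -S_INR; apply: lt_INR; apply/ltP.
have e : cos (2 * PI * (INR m / (INR n + 1))) = 1.
  have := prim_expr_order pm; rewrite /w cexp_pow => /(congr1 re) /= e.
  by rewrite -[RHS]e; congr cos; field; lra.
have hq : 0 < INR m / (INR n + 1) < 1.
  split; first by apply: Rdiv_lt_0_compat; lra.
  by apply: (Rmult_lt_reg_r (INR n + 1)) => //; field_simplify; lra.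
suff : cos (2 * PI * (INR m / (INR n + 1))) < 1 by rewrite e; lra.
by apply: cos_lt1; have := PI_RGT_0; split; nra.
Qed.

(* The unperturbed product: for |z| = 1 and 0 < r,
   prod_{j=0}^{n} |z - r e^{2 pi i j/(n+1)}| = |z^{n+1} - r^{n+1}|
   lies between 1 - r^{n+1} and 1 + r^{n+1}. *)
Lemma absprod0_bounds kappa delta n z : fst z ^ 2 + snd z ^ 2 = 1 ->
  0 < rho kappa n ->
  1 - rho kappa n ^ n.+1 <= absprod kappa 0 delta n z <= 1 + rho kappa n ^ n.+1.
Proof.
case: z => x y; rewrite [fst _]/= [snd _]/= => hz hr.
set p := rho kappa n; set Z := Cx x y; set r := Cx p 0.
have r0 : r != 0%R by apply/eqP => /(congr1 re) /=; rewrite /p; lra.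
have hN : 0 < INR n + 1 by have := pos_INR n; lra.
have rpow k : (r ^+ k)%R = Cx (p ^ k) 0.
  by elim: k => [|k IH] //; rewrite exprS IH; apply: cxE => /=; ring.
have E : absprod kappa 0 delta n (x, y) ^ 2 = nrm2 (Z ^+ n.+1 - r ^+ n.+1)%R.
  rewrite -(@prod_sub_root_powers _ n.+1 r Z _ (cexp_primitive n) r0) nrm2_prod.
  rewrite /absprod prod_upto_sq; apply: prod_upto_ext => j.
  rewrite /cdist pow2_sqrt; last by apply: Rplus_le_le_0_compat; apply: pow2_ge_0.
  rewrite cexp_pow /nrm2 /cpolar /= -/p.
  have -> : 2 * PI * (INR j + 0 * delta n j) / (INR n + 1)
            = INR j * (2 * PI / (INR n + 1)) by field; lra.
  ring.
have hq : 0 <= p ^ n.+1 by apply: pow_le; rewrite /p; lra.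
have hW : nrm2 (Z ^+ n.+1)%R = 1 by rewrite nrm2_exp /nrm2 hz pow1.
have [lo hi] := nrm2_unit_sub_real _ _ hW hq.
rewrite -rpow -E in lo hi.
have hA : 0 <= absprod kappa 0 delta n (x, y).
  by apply: prod_upto_nonneg => j; apply: sqrt_pos.
by split; nra.
Qed.
End ComplexPlane.

Lemma derivable_pt_lim_eq (f g : R -> R) x l l' :
  (forall y, f y = g y) -> l = l' -> derivable_pt_lim f x l -> derivable_pt_lim g x l'.
Proof. by move=> h <-; apply: derivable_pt_lim_ext. Qed.

Lemma derivable_pt_lim_affine (f : R -> R) l t a s :
  derivable_pt_lim f (t + a * s) l -> derivable_pt_lim (fun u => f (t + a * u)) s (a * l).
Proof.
move=> h.
have h1 : derivable_pt_lim (fun u => t + a * u) s a.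
  apply: (derivable_pt_lim_eq (fct_cte t + mult_real_fct a id)%F _ _ (0 + a * 1)) => //.
  - by rewrite Rplus_0_l Rmult_1_r.
  - apply: derivable_pt_lim_plus; first exact: derivable_pt_lim_const.
    by apply: derivable_pt_lim_scal; exact: derivable_pt_lim_id.
apply: (derivable_pt_lim_eq (comp f (fun u => t + a * u)) _ _ (l * a)) => //; first ring.
exact: derivable_pt_lim_comp.
Qed.

Lemma between_shift t u v y : Rmin (t + u) (t + v) <= y <= Rmax (t + u) (t + v) ->
  Rabs (y - t) <= Rmax (Rabs u) (Rabs v).
Proof.
rewrite /Rmin /Rmax; case: Rle_dec => h [h1 h2]; case: Rle_dec => h3; split_Rabs; lra.
Qed.

(* Apply the mean value theorem to s |-> f(t + a s) - a f(t + s) on [0, e],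
   then to f' on the segment between t + c and t + a c. *)
Lemma second_difference_bound (f f1 f2 : R -> R) t e a B : 0 < a ->
  (forall x, derivable_pt_lim f x (f1 x)) ->
  (forall x, derivable_pt_lim f1 x (f2 x)) ->
  (forall eta, Rabs (eta - t) <= Rmax 1 a * Rabs e -> Rabs (f2 eta) <= B) ->
  Rabs (f (t + a * e) - a * f (t + e) + (a - 1) * f t)
    <= a * Rabs (a - 1) * e ^ 2 * B.
Proof.
move=> ha Df Df1 hB.
set h := fun s => f (t + a * s) - a * f (t + 1 * s).
have Dh c : derivable_pt_lim h c (a * f1 (t + a * c) - a * (1 * f1 (t + 1 * c))).
  have d1 := derivable_pt_lim_affine _ _ t a c (Df (t + a * c)).
  have d2 := derivable_pt_lim_affine _ _ t 1 c (Df (t + 1 * c)).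
  exact: derivable_pt_lim_minus _ _ _ _ _ d1 (derivable_pt_lim_scal _ a _ _ d2).
have [c [Ec Hc]] := MVT_abs h _ 0 e (fun c _ => Dh c).
have [eta [Eeta Heta]] :=
  MVT_abs f1 f2 (t + c) (t + a * c) (fun y _ => Df1 y).
have hce : Rabs c <= Rabs e.
  move: Hc; rewrite /Rmin /Rmax; case: Rle_dec => _ [h1 h2]; split_Rabs; lra.
have hwin : Rabs (eta - t) <= Rmax 1 a * Rabs e.
  have := between_shift _ _ _ _ Heta.
  rewrite Rabs_mult (Rabs_right a); last lra.
  rewrite /Rmax; have := Rabs_pos c.
  by case: Rle_dec => h5; case: Rle_dec => h6; nra.
have hf2 := hB eta hwin; have hf20 := Rabs_pos (f2 eta).
have -> : f (t + a * e) - a * f (t + e) + (a - 1) * f t = h e - h 0.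
  by rewrite /h !Rmult_1_l Rmult_0_r Rplus_0_r; ring.
rewrite Ec Rminus_0_r !Rmult_1_l.
have -> : a * f1 (t + a * c) - a * f1 (t + c) = a * (f1 (t + a * c) - f1 (t + c)) by ring.
rewrite Rabs_mult (Rabs_right a); last lra.
rewrite Eeta (_ : t + a * c - (t + c) = (a - 1) * c); last ring.
rewrite Rabs_mult -(pow2_abs e).
have := Rabs_pos c; have := Rabs_pos e; have := Rabs_pos (a - 1).
set A := Rabs (a - 1); set C := Rabs c; set E := Rabs e; set F := Rabs (f2 eta).
move=> hA hE hC.
have : F * (A * C) * E <= B * (A * E) * E.
  apply: Rmult_le_compat_r => //; apply: Rmult_le_compat => //; try nra.
  by apply: Rmult_le_compat_l.
nra.
Qed.

(* Gf r ph t = |e^{i ph} - r e^{i t}|^2 = 1 + r^2 - 2 r cos(t - ph), and its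
   logarithm ell with first and second derivatives ell1, ell2 in t. *)
Definition Gf r ph t := 1 + r ^ 2 - 2 * r * cos (t - ph).
Definition ell r ph t := ln (Gf r ph t).
Definition ell1 r ph t := 2 * r * sin (t - ph) / Gf r ph t.
Definition ell2 r ph t :=
  (2 * r * cos (t - ph) * Gf r ph t - (2 * r * sin (t - ph)) ^ 2) / (Gf r ph t) ^ 2.

Lemma Gf_lb r ph t : 0 <= r -> (1 - r) ^ 2 <= Gf r ph t.
Proof. by move=> hr; rewrite /Gf; have := COS_bound (t - ph); nra. Qed.

Lemma Gf_pos r ph t : 0 <= r < 1 -> 0 < Gf r ph t.
Proof. by move=> [h1 h2]; have := Gf_lb r ph t h1; nra. Qed.

Lemma derivable_pt_lim_shift (g : R -> R) l ph t :
  derivable_pt_lim g (t - ph) l -> derivable_pt_lim (fun u => g (u - ph)) t l.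
Proof.
move=> h.
apply: (derivable_pt_lim_eq (fun u => g (- ph + 1 * u)) _ _ (1 * l)).
- by move=> y; congr g; ring.
- by ring.
- by apply: derivable_pt_lim_affine; rewrite (_ : - ph + 1 * t = t - ph) //; ring.
Qed.

Lemma derivable_Gf r ph t : derivable_pt_lim (Gf r ph) t (2 * r * sin (t - ph)).
Proof.
have hc := derivable_pt_lim_shift cos _ ph t (derivable_pt_lim_cos (t - ph)).
have hs := derivable_pt_lim_scal _ (2 * r) _ _ hc.
have := derivable_pt_lim_minus _ _ _ _ _ (derivable_pt_lim_const (1 + r ^ 2) t) hs.
by apply: derivable_pt_lim_eq => [y|]; rewrite /Gf /minus_fct /fct_cte /mult_real_fct; ring.
Qed.

Lemma derivable_ell r ph t : 0 <= r < 1 -> derivable_pt_lim (ell r ph) t (ell1 r ph t).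
Proof.
move=> hr; have := derivable_pt_lim_comp _ _ _ _ _ (derivable_Gf r ph t)
  (derivable_pt_lim_ln _ (Gf_pos r ph t hr)).
by apply: derivable_pt_lim_eq => [y|] //; rewrite /ell1 /Rdiv; ring.
Qed.

Lemma derivable_ell1 r ph t : 0 <= r < 1 -> derivable_pt_lim (ell1 r ph) t (ell2 r ph t).
Proof.
move=> hr; have hG := Gf_pos r ph t hr.
have hs := derivable_pt_lim_shift sin _ ph t (derivable_pt_lim_sin (t - ph)).
have := derivable_pt_lim_div _ _ _ _ _ (derivable_pt_lim_scal _ (2 * r) _ _ hs)
  (derivable_Gf r ph t) (Rgt_not_eq _ _ hG).
apply: derivable_pt_lim_eq => [y|] //.
by rewrite /ell2 /Rsqr /mult_real_fct /div_fct /ell1; field; lra.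
Qed.

(* |ell''| <= 6 / Gf for 0 <= r <= 1: write Gf = (1-r)^2 + 2r(1-cos) and use
   sin^2 <= 2(1 - cos). *)
Lemma ell2_bound r ph t : 0 <= r <= 1 -> 0 < Gf r ph t ->
  Rabs (ell2 r ph t) <= 6 / Gf r ph t.
Proof.
move=> hr hG.
set G := Gf r ph t in hG *.
have hcs := sin2_cos2 (t - ph); rewrite /Rsqr in hcs.
have hcb := COS_bound (t - ph).
set c := cos (t - ph) in hcs hcb *; set s := sin (t - ph) in hcs *.
have eG : G = (1 - r) ^ 2 + 2 * r * (1 - c) by rewrite /G /Gf -/c; ring.
have hsG : 4 * r ^ 2 * s ^ 2 <= 4 * G.
  have hs2 : s ^ 2 <= 2 * (1 - c) by nra.
  have e1 : r ^ 2 * s ^ 2 <= r ^ 2 * (2 * (1 - c)) by apply: Rmult_le_compat_l; nra.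
  have e2 : r ^ 2 * (1 - c) <= r * (1 - c) by apply: Rmult_le_compat_r; nra.
  have : 0 <= (1 - r) ^ 2 by nra.
  nra.
have hnum : Rabs (2 * r * c * G - (2 * r * s) ^ 2) <= 6 * G.
  have hrG : 0 <= r * G <= G by split; nra.
  have hcG1 : 0 <= r * G * (1 + c) by apply: Rmult_le_pos; lra.
  have hcG2 : 0 <= r * G * (1 - c) by apply: Rmult_le_pos; lra.
  have hs0 : 0 <= r ^ 2 * s ^ 2 by nra.
  by apply: Rabs_le; split; nra.
rewrite /ell2 -/G -/c -/s /Rdiv Rabs_mult Rabs_inv.
rewrite (Rabs_right (G ^ 2)); last by apply: Rle_ge; apply: pow2_ge_0.
apply: (Rle_trans _ (6 * G * / G ^ 2)); last by right; field; lra.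
apply: Rmult_le_compat_r => //.
by apply: Rlt_le; apply: Rinv_0_lt_compat; apply: pow_lt.
Qed.

Lemma ell_second_difference r ph t e a m : 0 <= r < 1 -> 0 < a -> 0 < m ->
  (forall eta, Rabs (eta - t) <= Rmax 1 a * Rabs e -> m <= Gf r ph eta) ->
  Rabs (ell r ph (t + a * e) - a * ell r ph (t + e) + (a - 1) * ell r ph t)
    <= 6 * a * Rabs (a - 1) * e ^ 2 / m.
Proof.
move=> hr ha hm hwin.
have -> : 6 * a * Rabs (a - 1) * e ^ 2 / m = a * Rabs (a - 1) * e ^ 2 * (6 / m).
  by field; lra.
apply: second_difference_bound => // [x|x|eta heta]; first exact: derivable_ell.
  exact: derivable_ell1.
have hG := hwin eta heta.
apply: (Rle_trans _ _ _ (ell2_bound r ph eta ltac:(lra) ltac:(lra))).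
by apply: Rmult_le_compat_l; [lra | apply: Rinv_le_contravar].
Qed.

Lemma sin_lipschitz a b : Rabs (sin a - sin b) <= Rabs (a - b).
Proof.
have [c [Ec _]] := MVT_abs sin cos b a (fun c _ => derivable_pt_lim_sin c).
rewrite Ec; have := Rabs_pos (a - b); have := COS_bound c => hc h.
have : Rabs (cos c) <= 1 by apply: Rabs_le; lra.
nra.
Qed.

(* Jordan-type inequality sin y >= y/3 on [0, pi/2], from sin y >= y - y^3/6. *)
Lemma sin_ge_third y : 0 <= y <= PI / 2 -> y / 3 <= sin y.
Proof.
move=> [h1 h2]; have hp := PI_4.
have [hb _] := sin_bound y 0 h1 ltac:(have := PI_RGT_0; lra).
move: hb; rewrite /sin_approx /= /sin_term /=.
have hy2 : y ^ 2 <= 4 by nra.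
have -> : (-1) ^ 0 * (y ^ 1 / INR 1) + (-1) ^ 1 * (y ^ 3 / INR (3 * 2))
          = y - y * y ^ 2 / 6 by rewrite /=; field.
nra.
Qed.

(* Distance from x (with |x| <= N) to the nearest point of N Z. *)
Definition circ_dist (x N : R) := Rmin (Rabs x) (N - Rabs x).

Lemma circ_dist_nonneg x N : Rabs x <= N -> 0 <= circ_dist x N.
Proof. by move=> hx; apply: Rmin_glb; [apply: Rabs_pos | lra]. Qed.

(* |sin(pi x / N)| >= pi/(3N) * circ_dist x N, by sin_ge_third applied at
   pi|x|/N or at pi - pi|x|/N, whichever lies in [0, pi/2]. *)
Lemma sin_circ_dist x N : 0 < N -> Rabs x <= N ->
  PI / (3 * N) * circ_dist x N <= Rabs (sin (PI * x / N)).
Proof.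
move=> hN hx; have hP := PI_RGT_0.
set y := PI * Rabs x / N.
have hy : 0 <= y <= PI.
  have -> : y = PI * (Rabs x * / N) by rewrite /y; field; lra.
  have : Rabs x * / N <= 1.
    have -> : 1 = N * / N by field; lra.
    by apply: Rmult_le_compat_r => //; apply: Rlt_le; apply: Rinv_0_lt_compat.
  have := Rle_mult_inv_pos _ _ (Rabs_pos x) hN; split; nra.
have Es : Rabs (sin (PI * x / N)) = sin y.
  have hs : 0 <= sin y by apply: sin_ge_0; lra.
  rewrite /y in hs *; case: (Rle_dec 0 x) => h.
    have ex : Rabs x = x by apply: Rabs_right; lra.
    by rewrite ex in hs *; rewrite Rabs_right; lra.
  have -> : PI * x / N = - (PI * Rabs x / N) by rewrite Rabs_left; [field|]; lra.
  by rewrite sin_neg Rabs_Ropp Rabs_right; lra.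
rewrite Es /circ_dist.
have hq : 0 < PI / (3 * N) by apply: Rdiv_lt_0_compat; lra.
case: (Rle_dec y (PI / 2)) => hyh.
  have := sin_ge_third y ltac:(lra).
  have -> : y / 3 = PI / (3 * N) * Rabs x by rewrite /y; field; lra.
  have := Rmin_l (Rabs x) (N - Rabs x); nra.
have : (PI - y) / 3 <= sin (PI - y) by apply: sin_ge_third; lra.
rewrite sin_PI_x.
have -> : (PI - y) / 3 = PI / (3 * N) * (N - Rabs x) by rewrite /y; field; lra.
have := Rmin_r (Rabs x) (N - Rabs x); nra.
Qed.

(* For r >= 1/2, Gf = (1 - r)^2 + 4 r sin^2((eta - ph)/2) >= 2 sin^2((eta - ph)/2). *)
Lemma Gf_ge_sin_half r ph eta : 1/2 <= r <= 1 ->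
  2 * sin ((eta - ph) / 2) ^ 2 <= Gf r ph eta.
Proof.
move=> hr.
have e1 : cos (eta - ph) = 1 - 2 * sin ((eta - ph) / 2) * sin ((eta - ph) / 2).
  by rewrite -cos_2a_sin; congr cos; field.
rewrite /Gf e1; have := pow2_ge_0 (sin ((eta - ph) / 2)).
have : 0 <= (1 - r) ^ 2 by nra.
nra.
Qed.

Lemma sin_half_window ph N W x t eta : 0 < N -> Rabs x <= N ->
  t - ph = 2 * PI * x / N -> Rabs (eta - t) <= W / N ->
  PI / (3 * N) * circ_dist x N - W / (2 * N) <= Rabs (sin ((eta - ph) / 2)).
Proof.
move=> hN hx ht he.
have hS1 : PI / (3 * N) * circ_dist x N <= Rabs (sin ((t - ph) / 2)).
  by rewrite (_ : (t - ph) / 2 = PI * x / N); [exact: sin_circ_dist | rewrite ht; field; lra].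
have hS2 : Rabs (sin ((t - ph) / 2) - sin ((eta - ph) / 2)) <= W / (2 * N).
  apply: (Rle_trans _ _ _ (sin_lipschitz _ _)).
  rewrite (_ : (t - ph) / 2 - (eta - ph) / 2 = - (eta - t) / 2); last by field.
  rewrite Rabs_mult Rabs_Ropp Rabs_inv (Rabs_right 2); last lra.
  by rewrite (_ : W / (2 * N) = W / N * / 2); [apply: Rmult_le_compat_r; lra | field; lra].
have := Rabs_triang_inv (sin ((t - ph) / 2)) (sin ((t - ph) / 2) - sin ((eta - ph) / 2)).
rewrite (_ : sin ((t - ph) / 2) - (sin ((t - ph) / 2) - sin ((eta - ph) / 2))
             = sin ((eta - ph) / 2)); last ring.
lra.
Qed.

Definition window_threshold (W : R) := 3 * W / PI + 3.
Definition window_const (c0 W : R) :=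
  Rmin (PI ^ 2 / 36) (c0 ^ 2 / (1 + window_threshold W ^ 2)).

Lemma window_const_pos c0 W : 0 < c0 -> 0 < window_const c0 W.
Proof.
move=> h; have hP := PI_RGT_0; rewrite /window_const; apply: Rmin_glb_lt.
  by apply: Rdiv_lt_0_compat; nra.
by apply: Rdiv_lt_0_compat; [nra | have := pow2_ge_0 (window_threshold W); lra].
Qed.

(* Far from the point (D >= window_threshold W) the angular separation gives
   Gf >= pi^2 (1 + D^2)/(36 N^2); near it, Gf >= (1 - r)^2 >= c0^2/N^2. *)
Lemma Gf_window_lb r ph N c0 W x t eta :
  0 < N -> 1/2 <= r < 1 -> c0 / N <= 1 - r -> 0 < c0 -> 0 <= W ->
  Rabs x <= N -> t - ph = 2 * PI * x / N -> Rabs (eta - t) <= W / N ->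
  window_const c0 W * (1 + circ_dist x N ^ 2) / N ^ 2 <= Gf r ph eta.
Proof.
move=> hN hr hd hc0 hW hx ht he.
have hP := PI_RGT_0; have hN2 : 0 < N ^ 2 by apply: pow_lt.
have hD0 := circ_dist_nonneg x N hx.
have hS := sin_half_window ph N W x t eta hN hx ht he.
have hG2 := Gf_ge_sin_half r ph eta ltac:(lra).
set D := circ_dist x N in hD0 hS *; set T := window_threshold W.
set S := Rabs (sin ((eta - ph) / 2)) in hS.
have hSS : sin ((eta - ph) / 2) ^ 2 = S ^ 2 by rewrite /S pow2_abs.
rewrite hSS in hG2.
apply: (Rmult_le_reg_r (N ^ 2)) => //.
rewrite (_ : window_const c0 W * (1 + D ^ 2) / N ^ 2 * N ^ 2
             = window_const c0 W * (1 + D ^ 2)); last by field; lra.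
case: (Rle_dec T D) => hT.
  have hD3 : 3 <= D.
    have : 0 <= 3 * W / PI by apply: Rle_mult_inv_pos; lra.
    by move: hT; rewrite /T /window_threshold; lra.
  have hNS : PI * D / 6 <= N * S.
    have hS' : PI * D / 3 - W / 2 <= S * N.
      apply: (Rle_trans _ ((PI / (3 * N) * D - W / (2 * N)) * N)); first by right; field; lra.
      by apply: Rmult_le_compat_r; lra.
    have : PI * T / 6 = W / 2 + PI / 2 by rewrite /T /window_threshold; field; lra.
    nra.
  have : (PI * D / 6) ^ 2 <= (N * S) ^ 2 by apply: pow_incr; nra.
  have := Rmin_l (PI ^ 2 / 36) (c0 ^ 2 / (1 + T ^ 2)); rewrite -/(window_const c0 W).
  have : 0 <= PI ^ 2 * (D ^ 2 - 1) by apply: Rmult_le_pos; nra.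
  nra.
have hT2 : D ^ 2 <= T ^ 2 by apply: pow_incr; lra.
have hTp : 0 < 1 + T ^ 2 by have := pow2_ge_0 T; lra.
have hG3 : c0 ^ 2 <= Gf r ph eta * N ^ 2.
  rewrite (_ : c0 ^ 2 = (c0 / N) ^ 2 * N ^ 2); last by field; lra.
  apply: Rmult_le_compat_r; first lra.
  apply: (Rle_trans _ ((1 - r) ^ 2)); last by apply: Gf_lb; lra.
  by apply: pow_incr; split; [apply: Rle_mult_inv_pos; lra | lra].
have hmin := Rmin_r (PI ^ 2 / 36) (c0 ^ 2 / (1 + T ^ 2)).
rewrite -/(window_const c0 W) in hmin.
have hc4 := window_const_pos c0 W hc0.
have hB : window_const c0 W * (1 + D ^ 2) <= c0 ^ 2 / (1 + T ^ 2) * (1 + T ^ 2).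
  by have := pow2_ge_0 D => ?; apply: Rmult_le_compat; lra.
rewrite (_ : c0 ^ 2 / (1 + T ^ 2) * (1 + T ^ 2) = c0 ^ 2) in hB; last by field; lra.
lra.
Qed.

(* The Cauchy weight 1/(1 + y^2); its integer translates have sums
   bounded independently of their number, which makes the error terms summable. *)
Definition cauchy (y : R) := / (1 + y ^ 2).

Lemma cauchy_pos y : 0 < cauchy y.
Proof. by apply: Rinv_0_lt_compat; have := pow2_ge_0 y; lra. Qed.

Lemma cauchy_even y : cauchy (- y) = cauchy y.
Proof. by rewrite /cauchy; congr Rinv; ring. Qed.

(* cauchy(y) <= 3 (atan(y + 1) - atan y): by the mean value theorem the increment
   is cauchy(c) for some c in [y, y + 1], and 1 + c^2 <= 3 (1 + y^2). *)
Lemma cauchy_le_atan_increment y : cauchy y <= 3 * (atan (y + 1) - atan y).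
Proof.
have [c [Ec Hc]] := MVT_abs atan cauchy y (y + 1) (fun c _ => derivable_pt_lim_atan c).
have hinc := atan_increasing y (y + 1) ltac:(lra).
have hqc := cauchy_pos c.
have {}Ec : atan (y + 1) - atan y = cauchy c.
  move: Ec; rewrite (_ : y + 1 - y = 1) ?Rabs_R1 ?Rmult_1_r; last ring.
  by rewrite !Rabs_right; lra.
rewrite Ec; move: Hc; rewrite /Rmin /Rmax; case: Rle_dec => [_ [h1 h2]|]; last lra.
have hc2 : 1 + c ^ 2 <= 3 * (1 + y ^ 2).
  rewrite -(pow2_abs c) -(pow2_abs y).
  have : Rabs c ^ 2 <= (Rabs y + 1) ^ 2.
    by apply: pow_incr; split; [apply: Rabs_pos | split_Rabs; lra].
  have : 0 <= (Rabs y - 1) ^ 2 by apply: pow2_ge_0.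
  nra.
have hp : 0 < 1 + y ^ 2 by have := pow2_ge_0 y; lra.
rewrite /cauchy (_ : 3 * / (1 + c ^ 2) = / ((1 + c ^ 2) / 3)); last by field; have := pow2_ge_0 c; lra.
by have := pow2_ge_0 c => ?; apply: Rinv_le_contravar; lra.
Qed.

Lemma sum_telescope (F : nat -> R) n :
  sum_f_R0 (fun j => F (S j) - F j) n = F (S n) - F O.
Proof. by elim: n => [|n IH] //=; rewrite IH; ring. Qed.

Lemma sum_cauchy_le c n : sum_f_R0 (fun j => cauchy (INR j + c)) n <= 3 * PI.
Proof.
apply: (Rle_trans _ (sum_f_R0 (fun j => 3 * (atan (INR (S j) + c) - atan (INR j + c))) n)).
  apply: sum_Rle => j _; rewrite S_INR (_ : INR j + 1 + c = INR j + c + 1); last ring.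
  exact: cauchy_le_atan_increment.
rewrite -(PartSum.sum_eq (fun j => (3 * atan (INR (S j) + c)) - 3 * atan (INR j + c))); last first.
  by move=> j _; ring.
rewrite (sum_telescope (fun j => 3 * atan (INR j + c))).
by have := atan_bound (INR (S n) + c); have := atan_bound (INR 0 + c); lra.
Qed.

Lemma cauchy_circ_dist x N : 0 <= N ->
  / (1 + circ_dist x N ^ 2) <= cauchy x + cauchy (N - x) + cauchy (N + x).
Proof.
move=> hN.
have := cauchy_pos x; have := cauchy_pos (N - x); have := cauchy_pos (N + x).
rewrite /circ_dist /Rmin; case: Rle_dec => h.
  by rewrite pow2_abs -/(cauchy x); lra.
case: (Rle_dec 0 x) => hx.
  by rewrite Rabs_right -?/(cauchy (N - x)); lra.
rewrite Rabs_left; last lra.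
by rewrite (_ : N - - x = N + x) -?/(cauchy (N + x)); [lra | ring].
Qed.

Lemma unit_circle_angle x y : x ^ 2 + y ^ 2 = 1 ->
  exists ph, 0 <= ph < 2 * PI /\ cos ph = x /\ sin ph = y.
Proof.
move=> h; have hP := PI_RGT_0.
have hx : -1 <= x <= 1 by split; nra.
have hac := acos_bound x.
have hs : sin (acos x) = Rabs y.
  rewrite sin_acos // -sqrt_Rsqr_abs; congr sqrt; rewrite /Rsqr; lra.
case: (Rle_dec 0 y) => hy.
  by exists (acos x); rewrite cos_acos // hs Rabs_right; lra.
exists (2 * PI - acos x); split.
  suff : acos x <> 0 by lra.
  by move=> e; have := cos_acos x hx; rewrite e cos_0 => ex; nra.
rewrite cos_minus sin_minus cos_2PI sin_2PI cos_acos // hs Rabs_left; last lra.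
by split; ring.
Qed.

Lemma cdist_polar r ph th :
  cdist (cos ph, sin ph) (cpolar r th) = sqrt (Gf r ph th).
Proof.
rewrite /cdist /cpolar /Gf /=; congr sqrt.
rewrite cos_minus; have := sin2_cos2 ph; have := sin2_cos2 th; rewrite /Rsqr.
nra.
Qed.

Lemma ln_prod_upto f n : (forall j, 0 < f j) ->
  ln (prod_upto f n) = sum_f_R0 (fun j => ln (f j)) n.
Proof.
move=> h; elim: n => [|n IH] //=.
by rewrite ln_mult ?IH //; exact: prod_upto_pos.
Qed.

Definition node_angle (delta : nat -> nat -> R) n a j :=
  2 * PI * (INR j + a * delta n j) / (INR n + 1).

Lemma ln_absprod kappa a delta n ph : 0 <= rho kappa n < 1 ->
  ln (absprod kappa a delta n (cos ph, sin ph)) =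
  sum_f_R0 (fun j => ell (rho kappa n) ph (node_angle delta n a j)) n / 2.
Proof.
move=> hr; rewrite /absprod ln_prod_upto => [|j]; last first.
  by rewrite cdist_polar; apply: sqrt_lt_R0; exact: Gf_pos.
rewrite [in RHS]/Rdiv (Rmult_comm (sum_f_R0 _ _)) scal_sum; apply: PartSum.sum_eq => j _.
have hG := Gf_pos (rho kappa n) ph (node_angle delta n a j) hr.
have hs := sqrt_lt_R0 _ hG.
by rewrite cdist_polar -/(node_angle delta n a j) /ell -{2}(sqrt_sqrt _ (Rlt_le _ _ hG)) ln_mult //; field.
Qed.

Lemma absprod_pos kappa a delta n ph : 0 <= rho kappa n < 1 ->
  0 < absprod kappa a delta n (cos ph, sin ph).
Proof.
move=> hr; apply: prod_upto_pos => j.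
by rewrite cdist_polar; apply: sqrt_lt_R0; exact: Gf_pos.
Qed.

Lemma rho_bounds kappa n : 0 < kappa -> 1/2 <= rho kappa n < 1.
Proof.
move=> hk; have hN : 0 < INR n + 1 by have := pos_INR n; lra.
have : 0 < kappa / (INR n + 1) by apply: Rdiv_lt_0_compat.
by rewrite /rho /Rmax; case: Rle_dec; lra.
Qed.

Lemma rho_gap kappa n : 0 < kappa -> Rmin (1/2) kappa / (INR n + 1) <= 1 - rho kappa n.
Proof.
move=> hk; have hN1 : 1 <= INR n + 1 by have := pos_INR n; lra.
have hm1 := Rmin_l (1/2) kappa; have hm2 := Rmin_r (1/2) kappa.
have hm0 : 0 < Rmin (1/2) kappa by apply: Rmin_glb_lt; lra.
set m := Rmin (1/2) kappa in hm1 hm2 hm0 *.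
have a1 : m / (INR n + 1) <= m.
  apply: (Rmult_le_reg_r (INR n + 1)); first lra.
  by rewrite (_ : m / (INR n + 1) * (INR n + 1) = m); [nra | field; lra].
have a2 : m / (INR n + 1) <= kappa / (INR n + 1).
  by rewrite /Rdiv; apply: Rmult_le_compat_r => //; apply: Rlt_le; apply: Rinv_0_lt_compat; lra.
by rewrite /rho /Rmax; case: Rle_dec; lra.
Qed.

(* rho^{n+1} <= max(1/2, e^{-kappa}): if rho = 1 - kappa/(n+1) use
   1 - u <= e^{-u}, otherwise rho = 1/2 and rho^{n+1} <= rho. *)
Lemma rho_pow kappa n : 0 < kappa -> rho kappa n ^ n.+1 <= Rmax (1/2) (exp (- kappa)).
Proof.
move=> hk; have hN : 0 < INR n + 1 by have := pos_INR n; lra.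
have hM1 := Rmax_l (1/2) (exp (- kappa)); have hM2 := Rmax_r (1/2) (exp (- kappa)).
have hr := rho_bounds kappa n hk.
move: hr; rewrite /rho {1 2 3}/Rmax; case: Rle_dec => h hr.
  apply: (Rle_trans _ (exp (- (kappa / (INR n + 1))) ^ n.+1)).
    by apply: pow_incr; split; [lra | have := exp_ineq1_le (- (kappa / (INR n + 1))); lra].
  rewrite -Rpower_pow; last exact: exp_pos.
  rewrite /Rpower ln_exp S_INR.
  by rewrite (_ : (INR n + 1) * - (kappa / (INR n + 1)) = - kappa); [lra | field; lra].
have : (1/2) ^ n <= 1 ^ n by apply: pow_incr; lra.
rewrite pow1.
have := pow_le (1/2) n ltac:(lra).
rewrite /=; nra.
Qed.

(* The second difference of the kernel at the j-th node; summed over j it is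
   ln|P_alpha|^2 - alpha ln|P_1|^2 + (alpha - 1) ln|P_0|^2. *)
Definition node_second_difference r ph delta n alpha j :=
  ell r ph (node_angle delta n alpha j) - alpha * ell r ph (node_angle delta n 1 j)
  + (alpha - 1) * ell r ph (node_angle delta n 0 j).

Definition node_const alpha kappa M :=
  6 * alpha * Rabs (alpha - 1) * (2 * PI * M) ^ 2
  / window_const (Rmin (1/2) kappa) (Rmax 1 alpha * (2 * PI * M)).

Lemma node_const_nonneg alpha kappa M : 0 < alpha -> 0 < kappa -> 0 <= node_const alpha kappa M.
Proof.
move=> ha hk; rewrite /node_const /Rdiv.
apply: Rmult_le_pos; last by apply: Rlt_le; apply: Rinv_0_lt_compat;
  apply: window_const_pos; apply: Rmin_glb_lt; lra.
apply: Rmult_le_pos; last exact: pow2_ge_0.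
by apply: Rmult_le_pos; [lra | exact: Rabs_pos].
Qed.

Lemma node_offset_bound n j ph : (j <= n)%nat -> 0 <= ph < 2 * PI ->
  Rabs (INR j - (INR n + 1) * ph / (2 * PI)) <= INR n + 1.
Proof.
move=> hjn hph; have hP := PI_RGT_0.
have hjn' : INR j <= INR n by apply: le_INR; apply/leP.
have hq : 0 <= ph / (2 * PI) <= 1.
  split; first by apply: Rle_mult_inv_pos; lra.
  apply: (Rmult_le_reg_r (2 * PI)); first lra.
  by rewrite (_ : ph / (2 * PI) * (2 * PI) = ph); [lra | field; lra].
rewrite (_ : (INR n + 1) * ph / (2 * PI) = (INR n + 1) * (ph / (2 * PI))); last by field; lra.
by have := pos_INR j; have := pos_INR n; split_Rabs; nra.
Qed.

Lemma rescaled_error_bound A c D e N E : 0 <= A -> 0 < c -> 0 < N -> Rabs e * N <= E ->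
  A * e ^ 2 / (c * (1 + D ^ 2) / N ^ 2) <= A * E ^ 2 / c * / (1 + D ^ 2).
Proof.
move=> hA hc hN he; have hD := pow2_ge_0 D.
have heN : (Rabs e * N) ^ 2 <= E ^ 2.
  by apply: pow_incr; split; [apply: Rmult_le_pos; [apply: Rabs_pos | lra] | lra].
rewrite -(pow2_abs e).
have -> : A * Rabs e ^ 2 / (c * (1 + D ^ 2) / N ^ 2) = A * (Rabs e * N) ^ 2 * / (c * (1 + D ^ 2)).
  by field; split; lra.
have -> : A * E ^ 2 / c * / (1 + D ^ 2) = A * E ^ 2 * / (c * (1 + D ^ 2)) by field; split; lra.
apply: Rmult_le_compat_r; last exact: Rmult_le_compat_l hA heN.
by apply: Rlt_le; apply: Rinv_0_lt_compat; nra.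
Qed.

Lemma node_second_difference_bound alpha kappa M delta n ph j :
  0 < alpha -> 0 < kappa -> Rabs (delta n j) <= M -> (j <= n)%nat ->
  0 <= ph < 2 * PI ->
  let N := INR n + 1 in let p := N * ph / (2 * PI) in
  Rabs (node_second_difference (rho kappa n) ph delta n alpha j)
  <= node_const alpha kappa M
     * (cauchy (INR j + - p) + cauchy (INR j + (- p - N)) + cauchy (INR j + (N - p))).
Proof.
move=> ha hk hdj hjn hph N p.
have hP := PI_RGT_0; have hN : 0 < N by rewrite /N; have := pos_INR n; lra.
have hr := rho_bounds kappa n hk; have hM0 : 0 <= M by have := Rabs_pos (delta n j); lra.
set c0 := Rmin (1/2) kappa; set W := Rmax 1 alpha * (2 * PI * M).
have hc0 : 0 < c0 by apply: Rmin_glb_lt; lra.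
have hW : 0 <= W by apply: Rmult_le_pos; [have := Rmax_l 1 alpha; lra | nra].
have hc4 := window_const_pos c0 W hc0.
set t := node_angle delta n 0 j; set e := 2 * PI * delta n j / N.
set x := INR j - p; set D := circ_dist x N.
have hx : Rabs x <= N by exact: node_offset_bound.
have he : Rabs e * N <= 2 * PI * M.
  have hq : 0 <= 2 * PI / N by apply: Rle_mult_inv_pos; lra.
  have ee : e = delta n j * (2 * PI / N) by rewrite /e; field; lra.
  rewrite ee Rabs_mult (Rabs_right (2 * PI / N)); last lra.
  rewrite (_ : Rabs (delta n j) * (2 * PI / N) * N = 2 * PI * Rabs (delta n j)).
    by nra.
  by field; lra.
have hD2 := pow2_ge_0 D; have hN2 : 0 < N ^ 2 by apply: pow_lt.
set m := window_const c0 W * (1 + D ^ 2) / N ^ 2.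
have hm : 0 < m by apply: Rdiv_lt_0_compat; nra.
have hwin eta : Rabs (eta - t) <= Rmax 1 alpha * Rabs e -> m <= Gf (rho kappa n) ph eta.
  move=> heta; apply: (Gf_window_lb _ _ _ _ _ x t) => //; first exact: rho_gap.
    by rewrite /t /node_angle /x /p -/N; field; lra.
  apply: (Rle_trans _ _ _ heta); rewrite /W.
  rewrite (_ : Rmax 1 alpha * (2 * PI * M) / N = Rmax 1 alpha * (2 * PI * M / N)); last by field; lra.
  apply: Rmult_le_compat_l; first by have := Rmax_l 1 alpha; lra.
  by apply: (Rmult_le_reg_r N) => //; rewrite (_ : 2 * PI * M / N * N = 2 * PI * M); [lra | field; lra].
have hsd := ell_second_difference (rho kappa n) ph t e alpha m ltac:(lra) ha hm hwin.
rewrite /node_second_difference -/t.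
rewrite (_ : node_angle delta n alpha j = t + alpha * e); last by rewrite /t /e /node_angle -/N; field; lra.
rewrite (_ : node_angle delta n 1 j = t + e); last by rewrite /t /e /node_angle -/N; field; lra.
apply: (Rle_trans _ _ _ hsd).
apply: (Rle_trans _ (node_const alpha kappa M * / (1 + D ^ 2))).
  apply: rescaled_error_bound => //.
  by have := Rabs_pos (alpha - 1); nra.
apply: Rmult_le_compat_l; first exact: node_const_nonneg.
rewrite (_ : INR j + - p = x) // -(cauchy_even (INR j + (- p - N))).
rewrite (_ : - (INR j + (- p - N)) = N - x); last by rewrite /x; ring.
rewrite (_ : INR j + (N - p) = N + x); last by rewrite /x; ring.
by apply: cauchy_circ_dist; lra.
Qed.

(* Summing the per-node estimates: each family of Cauchy weights contributes
   at most 3 pi, whence a bound independent of n and z. *)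
Lemma sum_node_second_differences_bound alpha kappa M delta n ph :
  0 < alpha -> 0 < kappa -> (forall j, (j <= n)%coq_nat -> Rabs (delta n j) <= M) ->
  0 <= ph < 2 * PI ->
  Rabs (sum_f_R0 (node_second_difference (rho kappa n) ph delta n alpha) n)
  <= node_const alpha kappa M * (9 * PI).
Proof.
move=> ha hk hd hph.
set N := INR n + 1; set p := N * ph / (2 * PI).
apply: (Rle_trans _ _ _ (Rabs_triang_gen _ _)).
apply: (Rle_trans _ (sum_f_R0 (fun j => node_const alpha kappa M *
   (cauchy (INR j + - p) + cauchy (INR j + (- p - N)) + cauchy (INR j + (N - p)))) n)).
  apply: sum_Rle => j hj.
  exact: node_second_difference_bound ha hk (hd j hj) (introT leP hj) hph.
rewrite -(PartSum.sum_eq (fun j => (cauchy (INR j + - p) + cauchy (INR j + (- p - N)) + cauchy (INR j + (N - p)))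
   * node_const alpha kappa M)); last by move=> j _; ring.
rewrite -scal_sum !plus_sum.
have := sum_cauchy_le (- p) n; have := sum_cauchy_le (- p - N) n; have := sum_cauchy_le (N - p) n.
have := node_const_nonneg alpha kappa M ha hk.
nra.
Qed.

Lemma sum_second_difference (f g h : nat -> R) a k :
  sum_f_R0 (fun j => f j - a * g j + (a - 1) * h j) k
  = sum_f_R0 f k - a * sum_f_R0 g k + (a - 1) * sum_f_R0 h k.
Proof. by elim: k => [|k IH] /=; [ring | rewrite IH; ring]. Qed.

Lemma ln_Rn_decomposition kappa alpha delta n ph : 0 < kappa ->
  ln (Rn kappa alpha delta n (cos ph, sin ph))
  = sum_f_R0 (node_second_difference (rho kappa n) ph delta n alpha) n / 2
    + (1 - alpha) * ln (absprod kappa 0 delta n (cos ph, sin ph)).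
Proof.
move=> hk; have hr : 0 <= rho kappa n < 1 by have := rho_bounds kappa n hk; lra.
have hP a := absprod_pos kappa a delta n ph hr.
have hPow : 0 < Rpower (absprod kappa 1 delta n (cos ph, sin ph)) alpha by apply: exp_pos.
rewrite /Rn /Rdiv ln_mult ?ln_Rinv ?ln_Rpower ?ln_absprod //; last exact: Rinv_0_lt_compat.
by rewrite /node_second_difference sum_second_difference; field.
Qed.

Lemma ln_le_compat a b : 0 < a -> a <= b -> ln a <= ln b.
Proof. by move=> ha [h|<-]; [apply: Rlt_le; exact: ln_increasing | lra]. Qed.

Lemma exp_le_compat a b : a <= b -> exp a <= exp b.
Proof. by move=> [h|<-]; [apply: Rlt_le; exact: exp_increasing | lra]. Qed.

(* The bound for the unperturbed product: 1 - rho^{n+1} <= |P_0| <= 2 and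
   rho^{n+1} <= max(1/2, e^{-kappa}) < 1, so |ln |P_0|| is uniformly bounded. *)
Definition ref_const kappa := ln 2 - ln (1 - Rmax (1/2) (exp (- kappa))).

Lemma ln_absprod0_bound kappa delta n ph : 0 < kappa ->
  Rabs (ln (absprod kappa 0 delta n (cos ph, sin ph))) <= ref_const kappa.
Proof.
move=> hk; have hr := rho_bounds kappa n hk.
have hq := rho_pow kappa n hk; have hq0 : 0 <= rho kappa n ^ n.+1 by apply: pow_le; lra.
have hek : exp (- kappa) < 1 by rewrite -exp_0; apply: exp_increasing; lra.
have hmax : Rmax (1/2) (exp (- kappa)) < 1 by rewrite /Rmax; case: Rle_dec; lra.
have hcirc : fst (cos ph, sin ph) ^ 2 + snd (cos ph, sin ph) ^ 2 = 1.
  by have := sin2_cos2 ph; rewrite /Rsqr /=; lra.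
have [lo hi] := absprod0_bounds kappa delta n _ hcirc ltac:(lra).
have hlo : ln (1 - Rmax (1/2) (exp (- kappa)))
           <= ln (absprod kappa 0 delta n (cos ph, sin ph)) by apply: ln_le_compat; lra.
have hhi : ln (absprod kappa 0 delta n (cos ph, sin ph)) <= ln 2.
  by apply: ln_le_compat; lra.
have hln2 : 0 < ln 2 by rewrite -ln_1; apply: ln_increasing; lra.
have hln1 : ln (1 - Rmax (1/2) (exp (- kappa))) < 0.
  by rewrite -ln_1; apply: ln_increasing; have := Rmax_l (1/2) (exp (- kappa)); lra.
by rewrite /ref_const; apply: Rabs_le; lra.
Qed.

Definition log_bound alpha kappa M :=
  node_const alpha kappa M * (9 * PI) / 2 + Rabs (1 - alpha) * ref_const kappa.

Lemma ln_Rn_bound alpha kappa M delta n ph :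
  0 < alpha -> 0 < kappa -> (forall j, (j <= n)%coq_nat -> Rabs (delta n j) <= M) ->
  0 <= ph < 2 * PI ->
  Rabs (ln (Rn kappa alpha delta n (cos ph, sin ph))) <= log_bound alpha kappa M.
Proof.
move=> ha hk hd hph.
rewrite ln_Rn_decomposition //; apply: (Rle_trans _ _ _ (Rabs_triang _ _)).
rewrite /Rdiv Rabs_mult (Rabs_right (/ 2)) ?Rabs_mult; last lra.
have := sum_node_second_differences_bound alpha kappa M delta n ph ha hk hd hph.
have := ln_absprod0_bound kappa delta n ph hk; have := Rabs_pos (1 - alpha).
by rewrite /log_bound; nra.
Qed.

Lemma Rn_pos kappa alpha delta n ph : 0 < kappa ->
  0 < Rn kappa alpha delta n (cos ph, sin ph).
Proof.
move=> hk; have hr : 0 <= rho kappa n < 1 by have := rho_bounds kappa n hk; lra.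
by apply: Rdiv_lt_0_compat; [exact: absprod_pos | exact: exp_pos].
Qed.

(* Main theorem: c = e^{-B} and C = e^{B} with B = log_bound alpha kappa M. *)
Theorem mainTheorem2 (alpha kappa : R) (delta : nat -> nat -> R)
  (halpha : 0 < alpha) (hkappa : 0 < kappa)
  (hdelta : exists M, M < 1/2 /\ forall n j, (j <= n)%coq_nat -> Rabs (delta n j) <= M) :
  exists c C, 0 < c /\ c <= C /\
    forall (n : nat) (z : R * R), fst z ^ 2 + snd z ^ 2 = 1 ->
      c <= Rn kappa alpha delta n z /\ Rn kappa alpha delta n z <= C.
Proof.
case: hdelta => M [_ hd].
have hph0 : 0 <= 0 < 2 * PI by have := PI_RGT_0; lra.
have hB := Rle_trans _ _ _ (Rabs_pos _) (ln_Rn_bound _ _ _ _ 0 0 halpha hkappa (hd 0%nat) hph0).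
exists (exp (- log_bound alpha kappa M)), (exp (log_bound alpha kappa M)).
split; first exact: exp_pos.
split; first by apply: exp_le_compat; lra.
move=> n [x y] /= hz.
have [ph [hph [<- <-]]] := unit_circle_angle x y hz.
have hRn := ln_Rn_bound alpha kappa M delta n ph halpha hkappa (hd n) hph.
rewrite -(exp_ln _ (Rn_pos kappa alpha delta n ph hkappa)).
by split; apply: exp_le_compat; move: hRn; split_Rabs; lra.
Qed.
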